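(* Fix a level $\ell<K$ and a node $y\in\mathcal Z_\ell$, and write $y_l=\mathrm{left}(y)$, $y_r=\mathrm{right}(y)$. Let $\tilde{\boldsymbol\theta}^0\in\mathbb R^{\mathcal Z^*}$ and $\tilde{\boldsymbol\theta}=\tilde{\boldsymbol\theta}^0+\boldsymbol\delta$, with $\boldsymbol\mu^0=\tilde{\boldsymbol p}(\tilde{\boldsymbol\theta}^0)$ and $\boldsymbol\mu=\tilde{\boldsymbol p}(\tilde{\boldsymbol\theta})$, be such that: (i) $\boldsymbol\mu^0$ is coherent among all levels $k\ge\ell$; (ii) $\delta_z=0$ for every $z$ with $I_z\not\subseteq I_y$; (iii) $\boldsymbol\mu$ is coherent among all levels $k>\ell$. Let $$t=\frac{b_\ell}{B_{\ell-1}}\log\Bigl(\frac{1-\mu_y}{\mu_y}\cdot\frac{\mu_{y_l}+\mu_{y_r}}{1-\mu_{y_l}-\mu_{y_r}}\Bigr)$$ and $\tilde{\boldsymbol\theta}'=\tilde{\boldsymbol\theta}+t\,\mathbf a_y$, where $\mathbf a_y$ is the column of $\mathbf A$ indexed by $y$. Then $\boldsymbol\mu'=\tilde{\boldsymbol p}(\tilde{\boldsymbol\theta}')$ is coherent among all levels $k\ge\ell$.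
   Context: Fix an integer $K\ge1$. Let $T^*$ be the complete binary tree of depth $K$ whose nodes are intervals: the root (level $0$) has $I_{\mathit{root}}=[0,1)$, and each node $z$ at level $k<K$ with $I_z=[\alpha_z,\beta_z)$ has children $\mathrm{left}(z)$, $\mathrm{right}(z)$ at level $k+1$ with intervals $[\alpha_z,\frac{\alpha_z+\beta_z}2)$ and $[\frac{\alpha_z+\beta_z}2,\beta_z)$. Let $\mathcal Z^*$ be its node set, $\mathcal Z_k$ the nodes at level $k$, $\mathrm{level}(z)$ the level of $z$, and $\mathcal Y^*=\mathcal Z^*\setminus\mathcal Z_K$. Fix liquidity parameters $b_k>0$ ($k=0,\dots,K$) and set $B_\ell=\sum_{k=\ell+1}^K b_k$ for $\ell=-1,0,\dots,K$ (so $B_{\ell-1}=B_\ell+b_\ell$). For $\tilde{\boldsymbol\theta}\in\mathbb R^{\mathcal Z^*}$, $\tilde p_z(\tilde{\boldsymbol\theta})=e^{\tilde\theta_z/b_k}/\sum_{z'\in\mathcal Z_k}e^{\tilde\theta_{z'}/b_k}$ for $z\in\mathcal Z_k$. The constraint matrix $\mathbf A\in\mathbb R^{\mathcal Z^*\times\mathcal Y^*}$ has entries $A_{zy}=B_{\mathrm{level}(z)}$ if $z=y$, $-b_{\mathrm{level}(z)}$ if $I_z\subsetneq I_y$, and $0$ otherwise. A vector $\boldsymbol\mu\in\mathbb R^{\mathcal Z^*}$ is coherent among a set $L$ of levels if for all $k,m\in L$ with $k<m$ and all $z\in\mathcal Z_k$, $\mu_z=\sum_{u\in\mathcal Z_m:\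 I_u\subseteq I_z}\mu_u$. *)

From HB Require Import structures.
From mathcomp Require Import all_boot all_order all_algebra.
From mathcomp Require Import all_classical all_reals.
From mathcomp.analysis Require Import sequences exp.
Set Implicit Arguments. Unset Strict Implicit. Unset Printing Implicit Defensive.
Import Order.TTheory GRing.Theory Num.Theory.
Local Open Scope classical_set_scope.
Local Open Scope ring_scope.

(* Nodes of the complete binary tree T* of depth K are encoded as pairs
   (k, j) with k <= K the level and j < 2^k the position within the level.
   The node (k, j) has interval I_(k,j) = [j / 2^k, (j+1) / 2^k); its
   children are (k+1, 2j) (left) and (k+1, 2j+1) (right), whose intervals
   are exactly the left and right halves of I_(k,j).  Vectors in
   R^{Z*} are functions nat -> nat -> R; only the values at nodes matter. *)

Section Tree.
Variable R : realType.

Definition Iv (k j : nat) : set R :=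
  [set x : R | (j%:R / 2 ^+ k <= x) && (x < j.+1%:R / 2 ^+ k)].

Definition Bl (K : nat) (b : nat -> R) (l : nat) : R :=
  \sum_(l.+1 <= k < K.+1) b k.
Definition Blm1 (K : nat) (b : nat -> R) (l : nat) : R :=
  \sum_(l <= k < K.+1) b k.

Definition ptilde (b : nat -> R) (theta : nat -> nat -> R) (k j : nat) : R :=
  expR (theta k j / b k) / \sum_(i < 2 ^ k) expR (theta k i / b k).

Definition Amat (K : nat) (b : nat -> R) (k j m i : nat) : R :=
  if (k == m) && (j == i) then Bl K b k
  else if `[< Iv k j `<=` Iv m i /\ Iv k j <> Iv m i >] then - b k
  else 0.

Definition coherent (K : nat) (L : nat -> Prop) (mu : nat -> nat -> R) : Prop :=
  forall k m, L k -> L m -> (k < m)%N -> (m <= K)%N ->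
  forall z, (z < 2 ^ k)%N ->
    mu k z = \sum_(u < 2 ^ m | `[< Iv m u `<=` Iv k z >]) mu m u.

End Tree.

From HB Require Import structures.
From mathcomp Require Import all_boot all_order all_algebra.
From mathcomp Require Import all_classical all_reals.
From mathcomp.analysis Require Import sequences exp.
From mathcomp Require Import zify ring lra.
Import Order.TTheory GRing.Theory Num.Theory.
Local Open Scope classical_set_scope.
Local Open Scope ring_scope.

(* The column a_y
   adds t B_l to the logit of y itself, -t b_n to every strict descendant of
   y at level n, and nothing elsewhere.  Hence at every level n > l the vector
   mu'_n is mu_n reweighted by exp(-t) on the subtree of y and renormalised;
   such ancestor-dependent reweightings preserve coherence, which settles all
   pairs of levels k < m with k > l.  For the pairs (l, m):
   - off the subtree of y, theta' = theta0, so both mu'_l and the level-m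
     masses of mu' under the nodes z <> y are mu0_l(z), up to a level
     dependent normalisation (coherence of mu0);
   - at y, both mu'_l(y) and the level-m mass of mu' under y are "tilts"
     p F / (p F + 1 - p) of mu_l(y) resp. mu_(l+1)(y_l) + mu_(l+1)(y_r), and
     the value of t is exactly the one making these two tilts equal;
   - two probability vectors that agree at y and are proportional elsewhere
     coincide. *)

Section Dyadic.
Context {R : realType}.

Lemma rescale (a k N : nat) : (k <= N)%N ->
  a%:R / (2:R) ^+ k = (a * 2 ^ (N - k))%:R / 2 ^+ N.
Proof.
move=> kN; rewrite -{2}(subnKC kN) exprD natrM natrX.
have h1 : (0 : R) < 2 ^+ k by rewrite exprn_gt0.
have h2 : (0 : R) < 2 ^+ (N - k) by rewrite exprn_gt0.
by field; rewrite !gt_eqF.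
Qed.

Lemma le_dyadic (a c N : nat) : (a%:R / (2:R) ^+ N <= c%:R / 2 ^+ N) = (a <= c)%N.
Proof. by rewrite ler_pM2r ?ler_nat // invr_gt0 exprn_gt0. Qed.

Lemma lt_dyadic (a c N : nat) : (a%:R / (2:R) ^+ N < c%:R / 2 ^+ N) = (a < c)%N.
Proof. by rewrite ltr_pM2r ?ltr_nat // invr_gt0 exprn_gt0. Qed.

(* If k < m, the point (j * 2^(m-k) + 1) / 2^m is in I_(k,j) but not in
   the level-m interval starting at j / 2^k, so I_(k,j) is not inside it. *)
Lemma Iv_sub (k j m i : nat) :
  (Iv k j `<=` (Iv m i : set R)) <-> ((m <= k)%N /\ (j %/ 2 ^ (k - m))%N = i).
Proof.
split.
- move=> H.
  have /H : Iv k j (j%:R / (2:R) ^+ k) by rewrite /Iv /= lexx /= lt_dyadic.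
  rewrite /Iv /= => /andP [h1 h2].
  case: (leqP m k) => mk.
    split => //; move: h1 h2.
    rewrite (rescale i _ _ mk) (rescale i.+1 _ _ mk) le_dyadic lt_dyadic => h1 h2.
    apply/eqP; rewrite eqn_leq -ltnS ltn_divLR ?expn_gt0 // h2 /=.
    by rewrite leq_divRL ?expn_gt0.
  have km : (k <= m)%N by apply: ltnW.
  move: h1 h2; rewrite (rescale j _ _ km) le_dyadic lt_dyadic => h1 h2.
  have hi : i = (j * 2 ^ (m - k))%N by lia.
  have h2p : (2 <= 2 ^ (m - k))%N.
    by rewrite -{1}(expn1 2) leq_pexp2l // subn_gt0.
  have : Iv k j (i.+1%:R / (2:R) ^+ m).
    rewrite /Iv /= (rescale j _ _ km) (rescale j.+1 _ _ km) le_dyadic lt_dyadic.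
    by apply/andP; split; [lia | rewrite hi mulSn; lia].
  by move/H; rewrite /Iv /= ltxx andbF.
- move=> [mk hji] x; rewrite /Iv /= => /andP [h1 h2].
  apply/andP; split.
    apply: le_trans h1; rewrite (rescale i _ _ mk) le_dyadic -hji; exact: leq_divM.
  apply: (lt_le_trans h2); rewrite (rescale i.+1 _ _ mk) le_dyadic -hji.
  by rewrite ltn_ceil ?expn_gt0.
Qed.

Lemma Iv_subE (k m u z : nat) : (k <= m)%N ->
  `[< Iv m u `<=` (Iv k z : set R) >] = ((u %/ 2 ^ (m - k))%N == z).
Proof. by move=> km; apply/asboolP/eqP => [/Iv_sub [] | h] //; apply/Iv_sub. Qed.

Lemma AmatE K (b : nat -> R) k j l y : Amat K b k j l y =
  if (k == l) && (j == y) then Bl K b l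
  else if (l < k)%N && ((j %/ 2 ^ (k - l))%N == y) then - b k else 0.
Proof.
rewrite /Amat; case: ifP => [/andP [/eqP -> _] //| hne].
congr (if _ then _ else _); apply/asboolP/andP.
- move=> [/Iv_sub [lk e] Hne]; split; last exact/eqP.
  rewrite ltn_neqAle lk andbT; apply/negP => /eqP lk'.
  by move: e hne; rewrite lk' subnn expn0 divn1 => ->; rewrite !eqxx.
- move=> [lk /eqP e]; split; first by apply/Iv_sub; split => //; apply: ltnW.
  move=> Heq; have : Iv l y `<=` (Iv k j : set R) by rewrite Heq.
  by move/Iv_sub => [kl _]; lia.
Qed.

End Dyadic.

(* The ancestor of node (m, u) at level k <= m is (k, u / 2^(m-k)). *)
Lemma ancestor_lt k m u : (k <= m)%N -> (u < 2 ^ m)%N -> (u %/ 2 ^ (m - k) < 2 ^ k)%N.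
Proof. by move=> km hu; rewrite ltn_divLR ?expn_gt0 // -expnD subnKC. Qed.

Lemma ancestor_comp l k m u : (l <= k)%N -> (k <= m)%N ->
  (u %/ 2 ^ (m - k) %/ 2 ^ (k - l) = u %/ 2 ^ (m - l))%N.
Proof. by move=> lk km; rewrite -divnMA -expnD; congr (u %/ 2 ^ _)%N; lia. Qed.

Lemma leftmost_descendant {k m x : nat} : (k <= m)%N -> (x < 2 ^ k)%N ->
  (x * 2 ^ (m - k) < 2 ^ m)%N /\ (x * 2 ^ (m - k) %/ 2 ^ (m - k) = x)%N.
Proof.
move=> km hx; rewrite mulnK ?expn_gt0 //; split => //.
by rewrite -{2}(subnKC km) expnD ltn_pmul2r ?expn_gt0.
Qed.

Section Sums.
Context {R : realType}.

Lemma sum_gt0_witness n (P : pred 'I_n) (F : 'I_n -> R) i0 :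
  (forall i, P i -> 0 < F i) -> P i0 -> 0 < \sum_(i < n | P i) F i.
Proof.
move=> hF hP; rewrite (bigD1 i0) //=; apply: ltr_wpDr (hF i0 hP).
by apply: sumr_ge0 => i /andP [hi _]; apply/ltW/hF.
Qed.

Lemma sum_pred1 n (F : nat -> R) y : (y < n)%N ->
  \sum_(i < n | (i : nat) == y) F i = F y.
Proof. by move=> hy; rewrite (big_pred1 (Ordinal hy)). Qed.

Lemma sum_split1 n (F : nat -> R) y : (y < n)%N ->
  \sum_(i < n) F i = F y + \sum_(i < n | (i : nat) != y) F i.
Proof. by move=> hy; rewrite (bigID (fun i : 'I_n => (i : nat) == y)) /= sum_pred1. Qed.

Lemma sum_children l y (F : nat -> R) : (y < 2 ^ l)%N ->
  \sum_(j < 2 ^ l.+1 | (j %/ 2)%N == y) F j = F (2 * y)%N + F (2 * y).+1.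
Proof.
move=> hy.
have h1 : ((2 * y).+1 < 2 ^ l.+1)%N by rewrite expnS; lia.
have h0 : (2 * y < 2 ^ l.+1)%N by lia.
rewrite (bigD1 (Ordinal h0)) /=; last by apply/eqP; lia.
rewrite (bigD1 (Ordinal h1)) /=; last first.
  by apply/andP; split; [apply/eqP; lia | rewrite -val_eqE /=; apply/eqP; lia].
rewrite big1 ?addr0 // => j /andP [/andP [/eqP hj]].
by rewrite -!val_eqE /= => hj1 hj2; lia.
Qed.

Lemma eq_off_one n (p q r : nat -> R) (a a' : R) y : (y < n)%N ->
  \sum_(i < n) p i = \sum_(i < n) q i -> p y = q y ->
  (forall j, (j < n)%N -> j != y -> [/\ 0 < r j, p j = a * r j & q j = a' * r j]) ->
  forall j, (j < n)%N -> p j = q j.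
Proof.
move=> hy hsum hpy hoff j hj; have [-> // | jy] := eqVneq j y.
have [_ -> ->] := hoff j hj jy; congr (_ * _).
set W := \sum_(i < n | (i : nat) != y) r i.
have hW : 0 < W.
  apply: (@sum_gt0_witness _ _ (fun i : 'I_n => r i) (Ordinal hj)) => // i hi.
  by have [] := hoff i (ltn_ord i) hi.
have offsum (c : R) (f : nat -> R) : (forall i, (i < n)%N -> i != y -> f i = c * r i) ->
    \sum_(i < n | (i : nat) != y) f i = c * W.
  by move=> hf; rewrite /W mulr_sumr; apply: eq_bigr => i; apply: hf.
have : a * W = a' * W.
  move: hsum; rewrite (sum_split1 _ p _ hy) (sum_split1 _ q _ hy) hpy => /addrI.
  rewrite (offsum a) => [|i hi iy]; last by have [] := hoff i hi iy.
  by rewrite (offsum a') => // i hi iy; have [] := hoff i hi iy.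
by move/(mulIf (lt0r_neq0 hW)).
Qed.

End Sums.

Section Softmax.
Context {R : realType}.
Variable b : nat -> R.
Implicit Types th : nat -> nat -> R.

Lemma softmax_den_gt0 th k : 0 < \sum_(i < 2 ^ k) expR (th k i / b k).
Proof.
have hk : (0 < 2 ^ k)%N by rewrite expn_gt0.
by apply: (@sum_gt0_witness _ _ xpredT _ (Ordinal hk)) => // i _; apply: expR_gt0.
Qed.

Lemma ptilde_gt0 th k j : 0 < ptilde b th k j.
Proof. exact: divr_gt0 (expR_gt0 _) (softmax_den_gt0 th k). Qed.

Lemma ptilde_sum1 th k : \sum_(i < 2 ^ k) ptilde b th k i = 1.
Proof. by rewrite /ptilde -mulr_suml divff // gt_eqF // softmax_den_gt0. Qed.

Lemma ptilde_shift th th' (c : nat -> R) k j : (forall i, th' k i = th k i + c i) ->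
  ptilde b th' k j = ptilde b th k j * expR (c j / b k) /
     \sum_(i < 2 ^ k) ptilde b th k i * expR (c i / b k).
Proof.
move=> hth; set E := \sum_(i < 2 ^ k) expR (th k i / b k).
have hE : E != 0 by rewrite gt_eqF // softmax_den_gt0.
have hE' := softmax_den_gt0 th' k.
have e i : ptilde b th k i * expR (c i / b k) = expR (th' k i / b k) / E.
  by rewrite /ptilde hth mulrDl expRD mulrAC.
rewrite e; under eq_bigr do rewrite e; rewrite -mulr_suml /ptilde.
by field; rewrite hE gt_eqF.
Qed.

Lemma ptilde_mass_bounds th k (P : pred nat) x x' :
  (x < 2 ^ k)%N -> P x -> (x' < 2 ^ k)%N -> ~~ P x' ->
  0 < \sum_(i < 2 ^ k | P i) ptilde b th k i < 1.
Proof.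
move=> hx Px hx' Px'.
have pos (Q : pred nat) z : (z < 2 ^ k)%N -> Q z ->
    0 < \sum_(i < 2 ^ k | Q i) ptilde b th k i.
  move=> hz Qz; apply: (@sum_gt0_witness _ _ _ _ (Ordinal hz)) => // i _.
  exact: ptilde_gt0.
have := ptilde_sum1 th k; rewrite (bigID (fun i : 'I_(2 ^ k) => P i)) /=.
have := pos _ _ hx Px; have := pos (fun i => ~~ P i) _ hx' Px'.
by move=> h1 h2 h3; apply/andP; split; lra.
Qed.

End Softmax.

Section Tilt.
Context {R : realType}.

(* The new mass of a class of mass p after the class is reweighted by F and
   the whole vector is renormalised. *)
Definition tilt (p F : R) : R := p * F / (p * F + (1 - p)).

Lemma reweight_mass n (mu w : nat -> R) (P : pred nat) (F : R) :
  \sum_(i < n) mu i = 1 -> (forall i, w i = if P i then F else 1) ->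
  \sum_(i < n | P i) mu i * w i / \sum_(j < n) mu j * w j =
  tilt (\sum_(i < n | P i) mu i) F.
Proof.
move=> h1 hw; set S := \sum_(i < n | P i) mu i.
have hin : \sum_(i < n | P i) mu i * w i = S * F.
  by rewrite /S mulr_suml; apply: eq_bigr => i Pi; rewrite hw Pi.
have hout : \sum_(i < n | ~~ P i) mu i * w i = 1 - S.
  move: h1; rewrite (bigID (fun i : 'I_n => P i)) /= -/S => h1.
  have -> : 1 - S = \sum_(i < n | ~~ P i) mu i by lra.
  by apply: eq_bigr => i nPi; rewrite hw (negbTE nPi) mulr1.
by rewrite -mulr_suml hin (bigID (fun i : 'I_n => P i)) /= hin hout.
Qed.

Lemma reweight_entry {n : nat} {mu w : nat -> R} {y : nat} {F : R} : (y < n)%N ->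
  \sum_(i < n) mu i = 1 -> (forall i, w i = if i == y then F else 1) ->
  mu y * w y / \sum_(j < n) mu j * w j = tilt (mu y) F.
Proof.
move=> hy h1 hw; have := reweight_mass _ _ _ (fun i => i == y) _ h1 hw.
rewrite (sum_pred1 _ mu _ hy).
by rewrite (sum_pred1 _ (fun i => mu i * w i / \sum_(j < n) mu j * w j) _ hy).
Qed.

(* Tilting p by its odds ratio against S, times F, is the same as tilting S
   by F: this is what the choice of t in Lemma 3 achieves. *)
Lemma tilt_odds (p S F : R) : 0 < p < 1 -> 0 < S < 1 -> 0 < F ->
  tilt p ((1 - p) / p * (S / (1 - S)) * F) = tilt S F.
Proof.
move=> /andP [p0 p1] /andP [S0 S1] F0; rewrite /tilt.
have q1 : 0 < S * F + (1 - S) by apply: addr_gt0; [exact: mulr_gt0 | lra].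
have q2 : 0 < (1 - p) * S * F + (1 - p) * (1 - S).
  by rewrite -mulrA -mulrDr; apply: mulr_gt0 => //; lra.
by field; rewrite !gt_eqF //; lra.
Qed.

Lemma expR_split (c B X : R) : 0 < c -> 0 <= B -> 0 < X ->
  expR (c / (c + B) * ln X * B / c) = X * expR (- (c / (c + B) * ln X)).
Proof.
move=> c0 B0 X0; rewrite -{2}(@lnK _ X) ?posrE // -expRD; congr expR.
by field; rewrite !gt_eqF //; lra.
Qed.

End Tilt.

Section Coherence.
Context {R : realType}.
Implicit Types (mu : nat -> nat -> R).

Definition mass_below mu (k z m : nat) : R :=
  \sum_(u < 2 ^ m | (u %/ 2 ^ (m - k))%N == z) mu m u.

Definition coherent_at mu (k m : nat) : Prop :=
  forall z, (z < 2 ^ k)%N -> mu k z = mass_below mu k z m.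

Lemma coherentP {K : nat} {L : nat -> Prop} {mu} {k m : nat} : coherent K L mu ->
  L k -> L m -> (k < m)%N -> (m <= K)%N -> coherent_at mu k m.
Proof.
move=> H Lk Lm km mK z hz; rewrite (H k m) //.
by apply: eq_bigl => u; rewrite Iv_subE // ltnW.
Qed.

Lemma coherentI K (L : nat -> Prop) mu :
  (forall k m, L k -> L m -> (k < m)%N -> (m <= K)%N -> coherent_at mu k m) ->
  coherent K L mu.
Proof.
move=> H k m Lk Lm km mK z hz; rewrite (H k m) //.
by apply: eq_bigl => u; rewrite Iv_subE // ltnW.
Qed.

Lemma sum_by_ancestor k m (P : pred nat) (F : nat -> R) : (k <= m)%N ->
  \sum_(u < 2 ^ m | P (u %/ 2 ^ (m - k))%N) F u =
  \sum_(j < 2 ^ k | P j) \sum_(u < 2 ^ m | (u %/ 2 ^ (m - k))%N == j) F u.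
Proof.
move=> km; under [RHS]eq_bigr do rewrite big_mkcond.
rewrite exchange_big /= big_mkcond; apply: eq_bigr => u _.
rewrite -big_mkcondr /=; have hu := @ancestor_lt k m u km (ltn_ord u).
case: ifP => Pu.
  rewrite (big_pred1 (Ordinal hu)) // => j /=.
  by rewrite -val_eqE /= eq_sym; case: eqP => [->|]; rewrite ?Pu ?andbF.
by rewrite big_pred0 // => j; case: eqP => [<-|]; rewrite ?Pu ?andbF.
Qed.

Lemma coherent_wsum mu k m (P : pred nat) (h : nat -> R) : (k <= m)%N ->
  coherent_at mu k m ->
  \sum_(j < 2 ^ k | P j) mu k j * h j =
  \sum_(u < 2 ^ m | P (u %/ 2 ^ (m - k))%N) mu m u * h (u %/ 2 ^ (m - k))%N.
Proof.
move=> km coh.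
rewrite (@sum_by_ancestor k m P (fun u => mu m u * h (u %/ 2 ^ (m - k))%N) km).
by apply: eq_bigr => j _; rewrite coh // mulr_suml; apply: eq_bigr => u /eqP ->.
Qed.

Lemma coherent_sum mu k m (P : pred nat) : (k <= m)%N -> coherent_at mu k m ->
  \sum_(j < 2 ^ k | P j) mu k j = \sum_(u < 2 ^ m | P (u %/ 2 ^ (m - k))%N) mu m u.
Proof.
move=> km coh; rewrite (@sum_by_ancestor k m P (mu m) km).
by apply: eq_bigr => j _; apply: coh.
Qed.

Lemma mass_below_self mu m z : (z < 2 ^ m)%N -> mass_below mu m z m = mu m z.
Proof.
move=> hz; rewrite /mass_below subnn expn0 -(sum_pred1 _ (mu m) _ hz).
by apply: eq_bigl => u; rewrite divn1.
Qed.

Lemma mass_below_coarsen mu k k' m z : (k <= k')%N -> (k' <= m)%N ->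
  coherent_at mu k' m -> mass_below mu k z m = mass_below mu k z k'.
Proof.
move=> kk' k'm coh; rewrite /mass_below.
rewrite (@coherent_sum mu k' m (fun v => v %/ 2 ^ (k' - k) == z)%N k'm coh).
by apply: eq_bigl => u; rewrite ancestor_comp.
Qed.

Lemma reweight_coherent mu l k m (h : nat -> R) : (l <= k)%N -> (k <= m)%N ->
  coherent_at mu k m ->
  coherent_at (fun n j => mu n j * h (j %/ 2 ^ (n - l))%N /
                 \sum_(i < 2 ^ n) mu n i * h (i %/ 2 ^ (n - l))%N) k m.
Proof.
move=> lk km coh z hz.
have hZ : \sum_(i < 2 ^ k) mu k i * h (i %/ 2 ^ (k - l))%N =
          \sum_(i < 2 ^ m) mu m i * h (i %/ 2 ^ (m - l))%N.
  rewrite (@coherent_wsum mu k m xpredT (fun j => h (j %/ 2 ^ (k - l))%N) km coh).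
  by apply: eq_bigr => u _; rewrite ancestor_comp.
rewrite /mass_below hZ coh // /mass_below !mulr_suml.
by apply: eq_bigr => u /eqP <-; rewrite ancestor_comp.
Qed.

(* The root level is coherent with every level: both carry total mass 1. *)
Lemma coherent_at_root (b : nat -> R) th m : coherent_at (ptilde b th) 0 m.
Proof.
move=> z; rewrite expn0 ltnS leqn0 => /eqP ->.
have := ptilde_sum1 b th 0; rewrite expn0 big_ord1 => ->.
rewrite /mass_below subn0 -(ptilde_sum1 b th m); apply: eq_bigl => u.
by rewrite divn_small.
Qed.

End Coherence.

(* The adjustment of Lemma 3, with the parameters of the theorem; the step t
   is arbitrary except in the last two lemmas. *)
Section Adjustment.
Context {R : realType}.
Variables (K : nat) (b : nat -> R).
Hypothesis b_gt0 : forall k, (k <= K)%N -> 0 < b k.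
Variables (l y : nat).
Hypotheses (l_lt_K : (l < K)%N) (y_lt : (y < 2 ^ l)%N).
Variables (theta0 delta : nat -> nat -> R) (t : R).
Hypothesis coh0 : coherent K (fun k => (l <= k)%N) (ptilde b theta0).
Hypothesis delta_out : forall k j, (k <= K)%N -> (j < 2 ^ k)%N ->
  ~ (Iv k j `<=` (Iv l y : set R)) -> delta k j = 0.

Let theta k j := theta0 k j + delta k j.
Let mu := ptilde b theta.
Hypothesis coh : coherent K (fun k => (l < k)%N) mu.
Let theta' k j := theta k j + t * Amat K b k j l y.
Let mu' := ptilde b theta'.

Let below_weight (x : nat) : R := if x == y then expR (- t) else 1.

Lemma mu'_deep n j : (l < n)%N -> (n <= K)%N ->
  mu' n j = mu n j * below_weight (j %/ 2 ^ (n - l))%N /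
            \sum_(i < 2 ^ n) mu n i * below_weight (i %/ 2 ^ (n - l))%N.
Proof.
move=> ln nK.
have w i : expR (t * Amat K b n i l y / b n) = below_weight (i %/ 2 ^ (n - l))%N.
  rewrite AmatE (gtn_eqF ln) ln /below_weight /=.
  case: ifP => _; last by rewrite mulr0 mul0r expR0.
  by congr expR; field; rewrite gt_eqF // b_gt0.
rewrite /mu' (@ptilde_shift _ b theta theta' (fun i => t * Amat K b n i l y) n j) // w.
by under eq_bigr do rewrite w.
Qed.

Lemma coherent_deep k m : (l < k)%N -> (k < m)%N -> (m <= K)%N -> coherent_at mu' k m.
Proof.
move=> lk km mK; have lm := ltn_trans lk km.
have kK : (k <= K)%N := leq_trans (ltnW km) mK.
have H := @reweight_coherent _ mu l k m below_weight (ltnW lk) (ltnW km)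
  (coherentP coh lk lm km mK).
move=> z hz; rewrite mu'_deep // H // /mass_below.
by apply: eq_bigr => u _; rewrite mu'_deep.
Qed.

(* Off the subtree of y neither delta nor a_y moves the logits, so there mu'
   is mu0 up to a level-dependent normalisation N0. *)
Let N0 (n : nat) : R := \sum_(i < 2 ^ n)
  ptilde b theta0 n i * expR ((delta n i + t * Amat K b n i l y) / b n).

Lemma mu'_outside n j : (n <= K)%N -> (j < 2 ^ n)%N ->
  ~~ ((l <= n)%N && ((j %/ 2 ^ (n - l))%N == y)) ->
  mu' n j = ptilde b theta0 n j / N0 n.
Proof.
move=> nK jn hj.
have c0 : delta n j + t * Amat K b n j l y = 0.
  rewrite delta_out //; last by move/Iv_sub => [ln e]; move: hj; rewrite ln e eqxx.
  rewrite AmatE; case: ifP => [/andP [/eqP e1 /eqP e2] | _].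
    by move: hj; rewrite e1 e2 subnn expn0 divn1 leqnn eqxx.
  case: ifP => [/andP [ln /eqP e] | _]; last by rewrite mulr0 add0r.
  by move: hj; rewrite (ltnW ln) e eqxx.
rewrite /mu' (@ptilde_shift _ b theta0 theta'
  (fun i => delta n i + t * Amat K b n i l y) n j).
  by rewrite c0 mul0r expR0 mulr1.
by move=> i; rewrite /theta' /theta addrA.
Qed.

Lemma mass_below_outside m j : (l < m)%N -> (m <= K)%N -> (j < 2 ^ l)%N -> j != y ->
  mass_below mu' l j m = ptilde b theta0 l j / N0 m.
Proof.
move=> lm mK jl jy.
rewrite (coherentP coh0 (leqnn l) (ltnW lm) lm mK j jl) /mass_below mulr_suml.
by apply: eq_bigr => u /eqP hu; rewrite mu'_outside // hu (negbTE jy) andbF.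
Qed.

Let top_factor : R := expR (t * Bl K b l / b l).

Lemma mu'_top_y : mu' l y = tilt (mu l y) top_factor.
Proof.
have w i : expR (t * Amat K b l i l y / b l) = if i == y then top_factor else 1.
  by rewrite AmatE eqxx ltnn /=; case: (i == y) => //; rewrite mulr0 mul0r expR0.
rewrite /mu' (@ptilde_shift _ b theta theta' (fun i => t * Amat K b l i l y) l y) //.
exact: (reweight_entry y_lt (ptilde_sum1 b theta l) w).
Qed.

Lemma mass_below_y' m : (l < m)%N -> (m <= K)%N ->
  mass_below mu' l y m = tilt (mass_below mu l y m) (expR (- t)).
Proof.
move=> lm mK; rewrite /mass_below.
under eq_bigr => u _ do rewrite mu'_deep //.
apply: (@reweight_mass _ _ (mu m) (fun u => below_weight (u %/ 2 ^ (m - l))%N)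
          (fun u => u %/ 2 ^ (m - l) == y)%N) => [|u //].
exact: ptilde_sum1.
Qed.

Lemma mass_below_y m : (l < m)%N -> (m <= K)%N ->
  mass_below mu l y m = mu l.+1 (2 * y)%N + mu l.+1 (2 * y).+1.
Proof.
move=> lm mK.
have coh1 : coherent_at mu l.+1 m.
  have [l1m | ml1] := ltnP l.+1 m; first exact: coherentP coh (ltnSn l) lm l1m mK.
  have -> : m = l.+1 by apply/eqP; rewrite eqn_leq ml1 lm.
  by move=> z hz; rewrite mass_below_self.
rewrite (@mass_below_coarsen _ mu l l.+1 m y (leqnSn l) lm coh1).
by rewrite /mass_below subSnn expn1 sum_children.
Qed.

Hypothesis t_def : t = b l / Blm1 K b l * ln ((1 - mu l y) / mu l y *
  ((mu l.+1 (2 * y)%N + mu l.+1 (2 * y).+1) /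
   (1 - mu l.+1 (2 * y)%N - mu l.+1 (2 * y).+1))).

(* For the prescribed t the two tilts at y coincide (Lemma tilt_odds). *)
Lemma mu'_y_coherent m : (0 < l)%N -> (l < m)%N -> (m <= K)%N ->
  mu' l y = mass_below mu' l y m.
Proof.
move=> l0 lm mK.
set S := mass_below mu l y m.
have [x' x'_lt x'_ne] : exists2 x', (x' < 2 ^ l)%N & x' != y.
  have [-> | y_ne0] := eqVneq y 0%N; [exists 1%N | exists 0%N] => //.
  - by rewrite -{1}(expn0 2) ltn_exp2l.
  - by rewrite expn_gt0.
  - by rewrite eq_sym.
have mu_y : 0 < mu l y < 1.
  rewrite -(sum_pred1 _ (mu l) _ y_lt).
  exact: (@ptilde_mass_bounds _ b theta l (fun i => i == y) y x').
have S_bd : 0 < S < 1.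
  have [hy1 ey] := leftmost_descendant (ltnW lm) y_lt.
  have [hx1 ex] := leftmost_descendant (ltnW lm) x'_lt.
  apply: (@ptilde_mass_bounds _ b theta m (fun u => u %/ 2 ^ (m - l) == y)%N
    _ _ hy1 _ hx1).
    by rewrite /= ey.
  by rewrite /= ex.
have Bl_ge0 : 0 <= Bl K b l.
  rewrite /Bl big_nat_cond; apply: sumr_ge0 => i /andP [/andP [_ hi] _].
  by apply/ltW/b_gt0.
have Blm1E : Blm1 K b l = b l + Bl K b l by rewrite /Blm1 /Bl big_ltn // ltnS ltnW.
have eF : top_factor = (1 - mu l y) / mu l y * (S / (1 - S)) * expR (- t).
  have X_gt0 : 0 < (1 - mu l y) / mu l y * (S / (1 - S)).
    by move: mu_y S_bd => /andP [? ?] /andP [? ?]; apply: mulr_gt0; apply: divr_gt0; lra.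
  move: X_gt0; rewrite /top_factor /S mass_below_y // opprD addrA t_def Blm1E.
  by move=> X_gt0; exact: (expR_split _ _ _ (b_gt0 _ (ltnW l_lt_K)) Bl_ge0 X_gt0).
by rewrite mu'_top_y mass_below_y' // eF tilt_odds // expR_gt0.
Qed.

Lemma coherent_top m : (l < m)%N -> (m <= K)%N -> coherent_at mu' l m.
Proof.
move=> lm mK; have [l0 | l_pos] := posnP l; first by rewrite l0; exact: coherent_at_root.
apply: (@eq_off_one _ (2 ^ l) (mu' l) (fun j => mass_below mu' l j m)
          (ptilde b theta0 l) (N0 l)^-1 (N0 m)^-1 y y_lt).
- rewrite /mass_below -(@sum_by_ancestor _ l m xpredT (mu' m) (ltnW lm)).
  by rewrite /mu' !ptilde_sum1.
- exact: mu'_y_coherent.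
- move=> j jl jy; split.
  + exact: ptilde_gt0.
  + rewrite mulrC mu'_outside ?(ltnW l_lt_K) //.
    by rewrite leqnn subnn expn0 divn1 jy.
  + by rewrite mass_below_outside // mulrC.
Qed.

End Adjustment.

Theorem lemma3 (R : realType) (K : nat) (b : nat -> R)
  (hb : forall k, (k <= K)%N -> 0 < b k)
  (l : nat) (hl : (l < K)%N) (y : nat) (hy : (y < 2 ^ l)%N)
  (theta0 delta : nat -> nat -> R) :
  let theta := fun k j => theta0 k j + delta k j in
  let mu0 := ptilde b theta0 in
  let mu := ptilde b theta in
  let yl := (2 * y)%N in
  let yr := (2 * y).+1 in
  coherent K (fun k => (l <= k)%N) mu0 ->
  (forall k j, (k <= K)%N -> (j < 2 ^ k)%N -> ~ (Iv k j `<=` (Iv l y : set R)) ->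
     delta k j = 0) ->
  coherent K (fun k => (l < k)%N) mu ->
  let t := b l / Blm1 K b l *
     ln ((1 - mu l y) / mu l y *
         ((mu l.+1 yl + mu l.+1 yr) / (1 - mu l.+1 yl - mu l.+1 yr))) in
  let theta' := fun k j => theta k j + t * Amat K b k j l y in
  coherent K (fun k => (l <= k)%N) (ptilde b theta').
Proof.
move=> theta mu0 mu yl yr coh0 delta_out coh t theta'.
apply: coherentI => k m lk lm km mK.
move: lk km; rewrite leq_eqVlt => /orP [/eqP <- | l_lt_k] km.
- exact: (coherent_top _ _ hb _ _ hl hy _ _ _ coh0 delta_out coh (erefl t) _ km mK).
- exact: (coherent_deep _ _ hb _ _ _ _ _ coh _ _ l_lt_k km mK).
Qed.
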